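(* Let $(X,d)$ be a compact metric space, $\mathbb{F}=\{f_n:n\in\mathbb{N}\}$ a sequence of continuous surjective self-maps of $X$, and $k\in\mathbb{N}$. If $(X,\mathbb{F})$ is sensitive then $(X,\mathbb{F}_k)$ is sensitive. If the family $\mathbb{F}$ is feeble open, then $(X,\mathbb{F}_k)$ sensitive implies $(X,\mathbb{F})$ sensitive.
   Context: Write $\omega_n=f_n\circ\cdots\circ f_1$ and, for $n>k$, $\omega^k_n=f_n\circ\cdots\circ f_{k+1}$; $\mathbb{F}_k=\{f_n:n\ge k+1\}$ is the truncated family. $(X,\mathbb{F})$ is sensitive if there is $\delta>0$ such that for every $x\in X$ and every neighborhood $U$ of $x$ there is $n\in\mathbb{N}$ with $\mathrm{diam}(\omega_n(U))>\delta$; $(X,\mathbb{F}_k)$ is sensitive if the same holds with $\omega^k_n$ ($n>k$). $\mathbb{F}$ is feeble open if for every non-empty open $U$ and every $f\in\mathbb{F}$, $f(U)$ has non-empty interior. *)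

From HB Require Import structures.
From mathcomp Require Import all_boot all_order all_algebra.
From mathcomp Require Import all_classical all_reals all_analysis.
Set Implicit Arguments. Unset Strict Implicit. Unset Printing Implicit Defensive.
Import Order.TTheory GRing.Theory Num.Theory.
Local Open Scope classical_set_scope.
Local Open Scope ring_scope.

(* Diameter of a subset of a metric space, as an extended real
   (sup of pairwise distances; -oo for the empty set). *)
Definition diam {R : realType} {X : metricType R} (A : set X) : \bar R :=
  ereal_sup [set (mdist x y)%:E | x in A & y in A].

(* comp_from f k n = f n \o ... \o f (k+1)  for n > k, and id for n <= k.
   The family is indexed from 1: F = {f 1, f 2, ...}; f 0 is never used. *)
Fixpoint comp_from {X : Type} (f : nat -> X -> X) (k n : nat) : X -> X :=
  match n with
  | 0 => id
  | n'.+1 => if (k < n'.+1)%N then f n'.+1 \o comp_from f k n' else id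
  end.

Definition omega {X : Type} (f : nat -> X -> X) (n : nat) : X -> X :=
  comp_from f 0 n.

Definition omega_k {X : Type} (f : nat -> X -> X) (k n : nat) : X -> X :=
  comp_from f k n.

Definition sensitive {R : realType} {X : metricType R} (f : nat -> X -> X) : Prop :=
  exists delta : R, 0 < delta /\
    forall (x : X) (U : set X), nbhs x U ->
      exists n : nat, (0 < n)%N /\ (delta%:E < diam (omega f n @` U))%E.

Definition sensitive_trunc {R : realType} {X : metricType R}
    (f : nat -> X -> X) (k : nat) : Prop :=
  exists delta : R, 0 < delta /\
    forall (x : X) (U : set X), nbhs x U ->
      exists n : nat, (k < n)%N /\ (delta%:E < diam (omega_k f k n @` U))%E.

Definition feeble_open {X : topologicalType} (f : nat -> X -> X) : Prop :=
  forall n : nat, (0 < n)%N ->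
    forall U : set X, open U -> U !=set0 -> (interior (f n @` U)) !=set0.

From HB Require Import structures.
From mathcomp Require Import all_boot all_order all_algebra.
From mathcomp Require Import all_classical all_reals all_analysis.
Import Order.TTheory GRing.Theory Num.Theory.
Local Open Scope classical_set_scope.
Local Open Scope ring_scope.

(* Everything rests on omega_n = omega^k_n o omega_k for n >= k.  For the
   first implication, pull a neighbourhood of x back along the continuous
   surjection omega_k to a neighbourhood of a preimage y, shrunk so that the
   finitely many maps omega_1, ..., omega_k spread it by at most delta; the
   sensitivity of F must then be witnessed at some n > k, i.e. by F_k.  For
   the second, feeble openness gives omega_k(U) a nonempty interior, on which
   the sensitivity of F_k applies. *)

Section compositions.
Context {X : Type} {f : nat -> X -> X}.

Lemma omega_kE k n : (k <= n)%N -> omega_k f k n \o omega f k = omega f n.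
Proof.
move=> kn; apply/funext => a /=; elim: n kn => [|n IH].
  by rewrite leqn0 => /eqP ->.
rewrite leq_eqVlt => /orP [/eqP ->|kn]; first by rewrite /omega_k /= ltnn.
by rewrite /omega_k /= kn /= -/(omega_k f k n) IH.
Qed.

Lemma image_omega_k k n (A : set X) : (k <= n)%N ->
  omega_k f k n @` (omega f k @` A) = omega f n @` A.
Proof. by move=> kn; rewrite image_comp omega_kE. Qed.

Lemma omega_surj : (forall n, (0 < n)%N -> forall y, exists x, f n x = y) ->
  forall n y, exists x, omega f n x = y.
Proof.
move=> fsurj; elim=> [|n IH] y; first by exists y.
have [z <-] := fsurj n.+1 isT y.
have [a <-] := IH z.
by exists a.
Qed.

End compositions.

Lemma omega_continuous {T : topologicalType} {f : nat -> T -> T} :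
  (forall n, (0 < n)%N -> continuous (f n)) -> forall n, continuous (omega f n).
Proof.
move=> fcont; elim=> [|n IH] x; first exact: cvg_id.
exact: (continuous_comp (IH x) (fcont n.+1 isT _)).
Qed.

Lemma near_images_ball (R : numFieldType) (T : topologicalType)
    (M : pseudoMetricType R) (g : nat -> T -> M) (m : nat) (y : T) (e : R) :
  0 < e -> (forall j, (j <= m)%N -> {for y, continuous (g j)}) ->
  \forall a \near y, forall j, (j <= m)%N -> ball (g j y) e (g j a).
Proof.
move=> e0 gcont.
have /filter_forall : forall i : 'I_m.+1,
    \forall a \near y, ball (g i y) e (g i a).
  by move=> i; apply: (gcont i (ltn_ord i)); exact: nbhsx_ballx.
apply: filterS => a near_a j jm; exact: (near_a (Ordinal (jm : (j < m.+1)%N))).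
Qed.

Section diameter.
Variables (R : realType) (X : metricType R).

Lemma le_diam (A B : set X) : A `<=` B -> (diam A <= diam B)%E.
Proof.
move=> AB; apply: ereal_sup_le => _ [a Aa [b Ab <-]].
by exists a; [exact: AB | exists b; [exact: AB |]].
Qed.

Lemma diam_le (A : set X) (r : R) :
  (forall a b, A a -> A b -> mdist a b <= r) -> (diam A <= r%:E)%E.
Proof.
by move=> Ar; apply: ge_ereal_sup => _ [a Aa [b Ab <-]]; rewrite lee_fin Ar.
Qed.

End diameter.

Lemma omega_interior_neq0 {T : topologicalType} {f : nat -> T -> T} (V : set T) :
  feeble_open f -> open V -> V !=set0 -> forall n, (omega f n @` V)° !=set0.
Proof.
move=> fopen oV V0; elim=> [|n IH].
  by rewrite [omega f 0]/= image_id; move: oV => /interior_id ->.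
have [z fz] := fopen n.+1 isT _ (@open_interior _ _) IH.
exists z; apply: interiorS fz.
rewrite -[omega f n.+1]/(f n.+1 \o omega f n) -image_comp.
by apply: image_subset; exact: interior_subset.
Qed.

Section sensitivity.
Variables (R : realType) (X : metricType R) (f : nat -> X -> X) (k : nat).

Lemma sensitive_trunc_of_sensitive :
  (forall n, (0 < n)%N -> continuous (f n)) ->
  (forall n, (0 < n)%N -> forall y, exists x, f n x = y) ->
  sensitive f -> sensitive_trunc f k.
Proof.
move=> fcont fsurj [d [d0 sens]]; exists d; split => // x U Ux.
have [y yx] := omega_surj fsurj k x.
have small : \forall a \near y,
    forall j, (j <= k)%N -> ball (omega f j y) (d / 2) (omega f j a).
  apply: near_images_ball; first by rewrite divr_gt0.
  by move=> j _; exact: omega_continuous.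
have Uy : nbhs y (omega f k @^-1` U).
  by apply: (omega_continuous fcont k y); rewrite yx.
have [n [_ dn]] := sens y _ (filterI small Uy).
set V := _ `&` _ in dn.
have diam_early m : (m <= k)%N -> (diam (omega f m @` V) <= d%:E)%E.
  move=> mk; apply: diam_le => _ _ [a [ya _] <-] [b [yb _] <-].
  by have := ball_splitr (ya m mk) (yb m mk); rewrite ballEmdist => /ltW.
have kn : (k < n)%N by rewrite ltnNge; apply/negP => /diam_early; rewrite leNgt dn.
exists n; split => //; apply: (lt_le_trans dn); apply: le_diam.
rewrite -(image_omega_k _ _ _ (ltnW kn)); apply: image_subset.
by move=> _ [a [_ Ua] <-].
Qed.

Lemma sensitive_of_sensitive_trunc :
  feeble_open f -> sensitive_trunc f k -> sensitive f.
Proof.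
move=> fopen [d [d0 sens]]; exists d; split => // x U Ux.
have U0 : U° !=set0 by exists x.
have [z zI] := omega_interior_neq0 U° fopen (@open_interior _ U) U0 k.
have [n [kn dn]] := sens z _ zI.
exists n; split; first exact: leq_ltn_trans kn.
apply: (lt_le_trans dn); rewrite image_omega_k; last exact: ltnW.
apply: le_diam; apply: image_subset; exact: interior_subset.
Qed.

End sensitivity.

Theorem mainTheorem6 (R : realType) (X : metricType R) (f : nat -> X -> X) (k : nat) :
  compact [set: X] ->
  (forall n : nat, (0 < n)%N -> continuous (f n)) ->
  (forall n : nat, (0 < n)%N -> forall y : X, exists x : X, f n x = y) ->
  (sensitive f -> sensitive_trunc f k) /\
  (feeble_open f -> sensitive_trunc f k -> sensitive f).
Proof.
move=> _ fcont fsurj; split.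
- exact: sensitive_trunc_of_sensitive.
- exact: sensitive_of_sensitive_trunc.
Qed.
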